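(* Let $n\geq 3$ and let $L^B$ be a blow-up of the Boolean lattice $L\cong\mathbf{2}^n$. Then the independence number of $G^c(L^B)_{SR}$ is $\beta\bigl(G^c(L^B)_{SR}\bigr)=2^{n-1}-1$.
   Context: Blow-up: keep $0,1$ of $L=\mathbf{2}^n$ and replace every $x\in L\setminus\{0,1\}$ by a finite nonempty chain $C_x$, ordered by the chain order within $C_x$ and, for $a\in C_x,b\in C_y$, $x\neq y$, by $a\leq b$ iff $x\leq y$ in $L$; $0$ least, $1$ greatest. $Z^*(M)$ is the set of nonzero $a$ with $a\wedge b=0$ for some $b\neq0$; $G^c(M)$ has vertex set $Z^*(M)$, distinct $a,b$ adjacent iff $a\wedge b\neq 0$. In a connected graph, $u$ is maximally distant from $v$ if $d(v,w)\leq d(u,v)$ for all neighbours $w$ of $u$; mutually maximally distant means each is maximally distant from the other. $G_{SR}$ has as vertices those $u$ mutually maximally distant from some $v$, distinct vertices adjacent iff mutually maximally distant in $G$. $\beta(G)$ is the maximum size of a set of pairwise non-adjacent vertices. *)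

From mathcomp Require Import all_boot.
Set Implicit Arguments.
Unset Strict Implicit.
Unset Printing Implicit Defensive.

Definition gedge (T : finType) (V : {set T}) (adj : rel T) : rel T :=
  fun a b => [&& a \in V, b \in V, a != b & adj a b].

Fixpoint within (T : finType) (e : rel T) (k : nat) (u v : T) : bool :=
  if k is k'.+1 then (u == v) || [exists w, e u w && within e k' w v]
  else u == v.

(* graph distance: least k with a walk of length <= k; shortest paths have
   length < #|T|.  (Convention: #|T| if unreachable; irrelevant for the
   connected graphs considered.) *)
Definition gdist (T : finType) (e : rel T) (u v : T) : nat :=
  find (fun k => within e k u v) (iota 0 #|T|).

Definition max_distant (T : finType) (e : rel T) (u v : T) : bool :=
  [forall w, e u w ==> (gdist e v w <= gdist e u v)].

Definition mut_max_distant (T : finType) (e : rel T) (u v : T) : bool :=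
  max_distant e u v && max_distant e v u.

Definition SR_vertices (T : finType) (V : {set T}) (e : rel T) : {set T} :=
  [set u in V | [exists v in V, mut_max_distant e u v]].

Definition SR_edge (T : finType) (V : {set T}) (e : rel T) : rel T :=
  gedge (SR_vertices V e) (mut_max_distant e).

Definition indep_num (T : finType) (W : {set T}) (e : rel T) : nat :=
  \max_(S : {set T} | (S \subset W) && [forall a in S, forall b in S, ~~ e a b])
     #|S|.

(* raw carrier: inl false = 0, inl true = 1, inr (x; i) = i-th element of
   the chain C_x (chain C_x has k x elements, ordered by i) *)
Definition blow_raw (n : nat) (k : {set 'I_n} -> nat) : finType :=
  (bool + {x : {set 'I_n} & 'I_(k x)})%type.

Definition blow_valid (n : nat) (k : {set 'I_n} -> nat) (a : blow_raw k) : bool :=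
  match a with
  | inl _ => true
  | inr p => (tag p != set0) && (tag p != setT)
  end.

Definition blow_raw_le (n : nat) (k : {set 'I_n} -> nat) (a b : blow_raw k) : bool :=
  match a, b with
  | inl false, _ => true
  | _, inl true => true
  | inl true, _ => false
  | _, inl false => false
  | inr p, inr q =>
      if tag p == tag q then (tagged p <= tagged q)%N
      else tag p \proper tag q
  end.

(* the blow-up L^B (elements of the form inr (x; i) with x = 0 or 1 of L
   are excluded) *)
Definition blowup (n : nat) (k : {set 'I_n} -> nat) : finType :=
  {a : blow_raw k | blow_valid a}.

Definition blow_le (n : nat) (k : {set 'I_n} -> nat) (a b : blowup k) : bool :=
  blow_raw_le (val a) (val b).

Definition blow0 (n : nat) (k : {set 'I_n} -> nat) : blowup k :=
  @exist _ (@blow_valid n k) (inl false) isT.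

(* a /\ b = 0 in L^B : the only common lower bound of a and b is 0 *)
Definition meet_zero (n : nat) (k : {set 'I_n} -> nat) (a b : blowup k) : bool :=
  [forall c, (blow_le c a && blow_le c b) ==> (c == blow0 k)].

Definition zdiv_set (n : nat) (k : {set 'I_n} -> nat) : {set blowup k} :=
  [set a | (a != blow0 k) && [exists b, (b != blow0 k) && meet_zero a b]].

Definition Gc_edge (n : nat) (k : {set 'I_n} -> nat) : rel (blowup k) :=
  gedge (zdiv_set k) (fun a b => ~~ meet_zero a b).

Arguments blow0 {n} k.
Arguments zdiv_set {n} k.
Arguments Gc_edge {n} k.

From mathcomp Require Import all_boot.
From mathcomp Require Import zify.
Set Implicit Arguments.
Unset Strict Implicit.
Unset Printing Implicit Defensive.

(* In L^B every element a lies over a subset [collapse a] of [n], and a /\ b = 0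
   exactly when these subsets are disjoint.  Hence two distinct zero divisors
   are adjacent in G^c(L^B) iff their labels meet, and any two of them have a
   common neighbour lying over a two-element set, so the graph has diameter 2.
   In a graph of diameter 2, distinct vertices are mutually maximally distant
   iff they are non-adjacent or have the same closed neighbourhood, which here
   means the same label.  So every zero divisor is a vertex of G_SR (paired
   with a vertex over the complementary label), and the labels of an
   independent set of G_SR form an intersecting family of proper subsets of
   [n], of size at most 2^(n-1) - 1; the least elements of the chains C_x with
   x containing a fixed point attain the bound. *)

Section IndependenceNumber.
Variables (T : finType) (W : {set T}) (e : rel T).

Lemma indep_num_leq N :
  (forall S : {set T}, S \subset W -> {in S &, forall a b, ~~ e a b} -> #|S| <= N) ->
  indep_num W e <= N.
Proof.
move=> bound; apply/bigmax_leqP => S /andP[sSW /forall_inP indS].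
by apply: bound => // a b aS bS; apply: (forall_inP (indS a aS)).
Qed.

Lemma leq_indep_num (S : {set T}) :
  S \subset W -> {in S &, forall a b, ~~ e a b} -> #|S| <= indep_num W e.
Proof.
move=> sSW indS; apply: leq_bigmax_cond; rewrite sSW /=.
by apply/forall_inP => a aS; apply/forall_inP => b bS; apply: indS.
Qed.

End IndependenceNumber.

Section SetFamilies.
Variable T : finType.
Implicit Types (x y : {set T}) (F : {set {set T}}).

Definition nontrivial x := (x != set0) && (x != setT).

Lemma setC_eqT x : (~: x == setT) = (x == set0).
Proof. by rewrite -setC0 (inj_eq (@setC_inj _)). Qed.

Lemma setC_eq0 x : (~: x == set0) = (x == setT).
Proof. by rewrite -setCT (inj_eq (@setC_inj _)). Qed.

Lemma nontrivialC x : nontrivial (~: x) = nontrivial x.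
Proof. by rewrite /nontrivial setC_eqT setC_eq0 andbC. Qed.

Lemma nontrivial_pair (i j : T) : 2 < #|T| -> nontrivial [set i; j].
Proof.
move=> T_gt2; apply/andP; split; first by apply/set0Pn; exists i; rewrite !inE eqxx.
apply: contraTneq T_gt2 => ijT; rewrite -cardsT -ijT cards2; by case: (i != j).
Qed.

Lemma card_setC_imset F : #|[set ~: x | x in F]| = #|F|.
Proof. exact/card_imset/setC_inj. Qed.

Lemma card_set : #|{set T}| = 2 ^ #|T|.
Proof. by have := card_powerset [set: T]; rewrite powersetT !cardsT. Qed.

(* An intersecting family is disjoint from the family of its complements. *)
Lemma intersecting_card F :
  setT \notin F -> {in F &, forall x y, x :&: y != set0} -> #|F| <= 2 ^ #|T|.-1 - 1.
Proof.
move=> FT F_int.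
have FC0 : F :&: [set ~: x | x in F] = set0.
  apply/setP => x; rewrite !inE; apply/andP => -[xF /imsetP[y yF xE]].
  by move: (F_int x y xF yF); rewrite xE setIC setICr eqxx.
have FC_sub : F :|: [set ~: x | x in F] \subset [set~ setT].
  apply/subsetP => x; rewrite !inE => /orP[xF | /imsetP[y yF ->]].
    by apply: contraNneq FT => <-.
  by rewrite setC_eqT; apply: contraTneq (F_int y y yF yF) => ->; rewrite setI0 eqxx.
move: (subset_leq_card FC_sub).
rewrite cardsU FC0 cards0 subn0 card_setC_imset cardsC1 card_set.
by case: #|T| => [|m]; rewrite ?expnS /=; lia.
Qed.

Definition star (i : T) : {set {set T}} := [set x : {set T} | (i \in x) && (x != setT)].

Lemma card_star i : #|star i| = 2 ^ #|T|.-1 - 1.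
Proof.
have C0 : star i :&: [set ~: x | x in star i] = set0.
  apply/setP => x; rewrite !inE; apply/andP => -[/andP[ix _] /imsetP[y]].
  by rewrite inE => /andP[iy _] xE; move: ix; rewrite xE inE iy.
have CU : star i :|: [set ~: x | x in star i] = ~: [set set0; setT].
  apply/setP => x; rewrite !inE negb_or; apply/orP/idP.
    have memN0 y : i \in y -> y != set0 by move=> iy; apply/set0Pn; exists i.
    case=> [/andP[/memN0 -> ->] // | /imsetP[y]].
    by rewrite inE => /andP[/memN0 y0 yT] ->; rewrite setC_eq0 setC_eqT y0 yT.
  move=> /andP[x0 xT]; case ix: (i \in x); [by left; rewrite xT | right].
  apply/imsetP; exists (~: x); last by rewrite setCK.
  by rewrite inE inE ix setC_eqT x0.
have set0_neqT : (set0 : {set T}) != setT by apply/eqP => /setP/(_ i); rewrite !inE.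
have: #|star i| + #|star i| = 2 ^ #|T| - 2.
  rewrite -card_set -(cardsC [set set0; setT]) cards2 set0_neqT addKn -CU.
  by rewrite cardsU C0 cards0 subn0 card_setC_imset.
have : 0 < #|T| by apply/card_gt0P; exists i.
by case: #|T| => // m _; rewrite expnS /=; have := expn_gt0 2 m; lia.
Qed.

End SetFamilies.

Section DiameterTwo.
Variables (T : finType) (e : rel T).

Lemma within1 u v : within e 1 u v = (u == v) || e u v.
Proof.
rewrite /=; congr (_ || _); apply/existsP/idP => [[w /andP[euw /eqP <-]] // | euv].
by exists v; rewrite euv eqxx.
Qed.

Lemma within_refl m u : within e m u u.
Proof. by case: m => [|m] /=; rewrite eqxx. Qed.

Lemma within2_path u w v : e u w -> e w v -> within e 2 u v.
Proof.
move=> euw ewv; apply/orP; right; apply/existsP; exists w.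
by rewrite euw -/(within e 1 _ _) within1 ewv orbT.
Qed.

Lemma within2_edge u v : e u v -> within e 2 u v.
Proof.
move=> euv; apply/orP; right; apply/existsP; exists v.
by rewrite euv -/(within e 1 _ _) within_refl.
Qed.

Lemma gdist_within2 u v : 2 < #|T| -> within e 2 u v ->
  gdist e u v = if u == v then 0 else if e u v then 1 else 2.
Proof.
have find012 (p : pred nat) s : p 2 ->
    find p [:: 0, 1, 2 & s] = if p 0 then 0 else if p 1 then 1 else 2.
  by move=> p2 /=; rewrite p2; case: (p 0); case: (p 1).
rewrite /gdist; case: #|T| => [|[|[|m]]] // _ uv2.
by rewrite (find012 (fun k => within e k u v)) // within1 /=; case: (u == v).
Qed.

Definition cnbhd u : {set T} := [set w | (w == u) || e u w].

Variable V : {set T}.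
Hypotheses (e_sym : symmetric e) (e_irr : irreflexive e).
Hypothesis e_in : forall u v, e u v -> u \in V.
Hypothesis no_isolated : {in V, forall u, exists w, e u w}.
Hypothesis diam2 : {in V &, forall u v, within e 2 u v}.
Hypothesis T_gt2 : 2 < #|T|.

Lemma gdist_diam2 : {in V &, forall u v,
  gdist e u v = if u == v then 0 else if e u v then 1 else 2}.
Proof. by move=> u v uV vV; apply: gdist_within2; last exact: diam2. Qed.

(* As all distances are at most 2, the condition only bites when [u] and [v]
   are adjacent. *)
Lemma max_distant_diam2 u v : u \in V -> v \in V ->
  max_distant e u v = (u != v) && (e u v ==> (cnbhd u \subset cnbhd v)).
Proof.
move=> uV vV; have wV w : e u w -> w \in V by rewrite e_sym => /e_in.
rewrite /max_distant; have [<-|uv] /= := eqVneq u v.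
  have [w euw] := no_isolated uV; apply/forallPn; exists w.
  rewrite euw !gdist_diam2 ?(wV w) // eqxx.
  have uw : u != w by apply: contraTneq euw => <-; rewrite e_irr.
  by rewrite (negbTE uw) euw.
rewrite gdist_diam2 // (negbTE uv); have [euv|] /= := boolP (e u v); last first.
  move=> _; apply/forallP => w; apply/implyP => /wV wV'; rewrite gdist_diam2 //.
  by case: (v == w); case: (e v w).
apply/forallP/subsetP => sub w.
  rewrite !inE => /orP[/eqP-> | euw]; first by rewrite e_sym euv orbT.
  have := implyP (sub w) euw; rewrite gdist_diam2 ?(wV w euw) // eq_sym.
  by case: (w == v); case: (e v w).
apply/implyP => euw; rewrite gdist_diam2 ?(wV w euw) //.
have /orP[/eqP<- | evw] : (w == v) || e v w by move: (sub w); rewrite !inE euw orbT; apply.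
  by rewrite eqxx.
by rewrite evw; case: (v == w).
Qed.

Lemma mut_max_distant_diam2 u v : u \in V -> v \in V ->
  mut_max_distant e u v = (u != v) && (e u v ==> (cnbhd u == cnbhd v)).
Proof.
move=> uV vV; rewrite /mut_max_distant !max_distant_diam2 // eq_sym e_sym.
by rewrite eqEsubset; case: (v != u); case: (e v u).
Qed.

End DiameterTwo.

Section BlowUp.
Variables (n : nat) (k : {set 'I_n} -> nat).
Hypothesis k_gt0 : forall x, nontrivial x -> 0 < k x.

Local Notation LB := (blowup k).
Local Notation Z := (zdiv_set k).
Local Notation e := (Gc_edge k).
Implicit Types (x : {set 'I_n}) (a b c : LB).

Definition blow1 : LB := exist _ (inl true) isT.

Definition collapse (a : LB) : {set 'I_n} :=
  match val a with inl b => if b then setT else set0 | inr p => tag p end.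

(* The least element of C_x, with 0 and 1 standing for x = set0 and x = setT. *)
Definition chain_bot (x : {set 'I_n}) : LB :=
  if x == set0 then blow0 k else if x == setT then blow1 else
  if insub 0 : option 'I_(k x) is Some i
  then insubd (blow0 k) (inr (Tagged (fun y => 'I_(k y)) i))
  else blow0 k.

Lemma chain_botE x : nontrivial x ->
  exists2 i : 'I_(k x), val i = 0 & val (chain_bot x) = inr (Tagged _ i).
Proof.
move=> ntx; have /andP[x0 xT] := ntx; rewrite /chain_bot (negbTE x0) (negbTE xT).
case: insubP => [i _ i0 | ]; last by rewrite k_gt0.
by exists i; rewrite // val_insubd /= x0 xT.
Qed.

Lemma chain_botK : cancel chain_bot collapse.
Proof.
move=> x; have [ntx | ] := boolP (nontrivial x).
  by have [i _ bx] := chain_botE ntx; rewrite /collapse bx.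
by rewrite negb_and !negbK /chain_bot => /orP[]/eqP->; rewrite ?eqxx //; case: eqP.
Qed.

Lemma collapse_le a b : blow_le a b -> collapse a \subset collapse b.
Proof.
case: a b => [[[]|[x i]] va] [[[]|[y j]] vb]; rewrite /blow_le /collapse //=;
  rewrite ?subxx ?sub0set ?subsetT //.
by case: eqP => [xy _ | _ /proper_sub]; rewrite ?xy.
Qed.

Hypothesis n_gt0 : 0 < n.

Lemma collapse_eq0 a : (collapse a == set0) = (a == blow0 k).
Proof.
case: a => [[[]|[x i]] va]; rewrite /collapse -[_ == blow0 k]val_eqE /= ?eqxx //.
  by apply/negbTE/eqP => /setP/(_ (Ordinal n_gt0)); rewrite !inE.
by case/andP: va => /negbTE.
Qed.

Lemma chain_bot_le x a : x \subset collapse a -> blow_le (chain_bot x) a.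
Proof.
have [ntx | ] := boolP (nontrivial x); last first.
  rewrite negb_and !negbK /chain_bot => /orP[]/eqP->; rewrite ?eqxx //.
  case: eqP => [_ _ | T0]; first by case: a => [[[]|[y j]] va].
  rewrite subTset; case: a => [[[]|[y j]] va] //=; rewrite /collapse /= => /eqP yT.
    by case: T0.
  by case/negP: (proj2 (andP va)); apply/eqP.
have [i i0 bx] := chain_botE ntx; rewrite /blow_le bx.
case: a => [[[]|[y j]] va] //=; rewrite /collapse /=.
  by rewrite subset0; case/andP: ntx => /negbTE ->.
by move=> xy; case: eqP => [_|neq]; rewrite ?i0 // properEneq xy andbT; apply/eqP.
Qed.

Lemma meet_zeroE a b : meet_zero a b = (collapse a :&: collapse b == set0).
Proof.
apply/forallP/eqP => [mz | ab0 c].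
  have /implyP := mz (chain_bot (collapse a :&: collapse b)).
  by rewrite !chain_bot_le ?subsetIl ?subsetIr // -collapse_eq0 chain_botK => /(_ isT)/eqP.
apply/implyP => /andP[ca cb]; rewrite -collapse_eq0 -subset0 -ab0 subsetI.
by rewrite !collapse_le.
Qed.

Lemma zdiv_setE a : (a \in Z) = nontrivial (collapse a).
Proof.
rewrite inE -collapse_eq0 /nontrivial; congr (_ && _); apply/existsP/idP.
  case=> b /andP[b0]; rewrite meet_zeroE => /eqP ab0; apply: contraNneq b0 => aT.
  by rewrite -collapse_eq0 -ab0 aT setTI.
move=> aT; exists (chain_bot (~: collapse a)).
by rewrite -collapse_eq0 meet_zeroE chain_botK setICr eqxx setC_eq0 aT.
Qed.

Lemma chain_bot_inZ x : nontrivial x -> chain_bot x \in Z.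
Proof. by rewrite zdiv_setE chain_botK. Qed.

Lemma Gc_edgeE a b :
  e a b = [&& a \in Z, b \in Z, a != b & collapse a :&: collapse b != set0].
Proof. by rewrite /Gc_edge /gedge meet_zeroE. Qed.

Section GcGraph.
Hypothesis n_gt2 : 2 < n.

Let pair_inZ (i j : 'I_n) : chain_bot [set i; j] \in Z.
Proof. by apply/chain_bot_inZ/nontrivial_pair; rewrite card_ord. Qed.

Let atom_inZ (i : 'I_n) : chain_bot [set i] \in Z.
Proof. by rewrite -[[set i]]setUid pair_inZ. Qed.

Lemma Gc_edge_sym : symmetric e.
Proof.
by move=> a b; rewrite !Gc_edgeE setIC eq_sym; case: (a \in Z); case: (b \in Z).
Qed.

Lemma Gc_edge_irr : irreflexive e.
Proof. by move=> a; rewrite Gc_edgeE eqxx !andbF. Qed.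

Lemma Gc_edge_inZ a b : e a b -> a \in Z.
Proof. by rewrite Gc_edgeE => /andP[]. Qed.

Lemma Gc_no_isolated : {in Z, forall u, exists w, e u w}.
Proof.
move=> u uZ; have /andP[/set0Pn[i iu] uT] : nontrivial (collapse u) by rewrite -zdiv_setE.
have [j _ ju] : exists2 j, j \in setT & j \notin collapse u.
  by apply/subsetPn; rewrite subTset.
exists (chain_bot [set i; j]); rewrite Gc_edgeE uZ pair_inZ /= chain_botK.
apply/andP; split; first by apply: contraNneq ju => ->; rewrite chain_botK !inE eqxx orbT.
by apply/set0Pn; exists i; rewrite !inE iu eqxx.
Qed.

Lemma Gc_diam2 : {in Z &, forall u v, within e 2 u v}.
Proof.
move=> u v uZ vZ; have [<-|uv] := eqVneq u v; first exact: within_refl.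
have [euv|] := boolP (e u v); first exact: within2_edge.
rewrite Gc_edgeE uZ vZ uv negbK => /eqP uv0.
have /andP[/set0Pn[i iu] _] : nontrivial (collapse u) by rewrite -zdiv_setE.
have /andP[/set0Pn[j jv] _] : nontrivial (collapse v) by rewrite -zdiv_setE.
set w := chain_bot [set i; j]; have cw : collapse w = [set i; j] by rewrite chain_botK.
apply: (@within2_path _ _ _ w); rewrite Gc_edgeE ?uZ ?vZ pair_inZ /= cw.
  apply/andP; split; last by apply/set0Pn; exists i; rewrite !inE iu eqxx.
  by apply/eqP => uw; have := in_set0 j; rewrite -uv0 inE jv {1}uw cw !inE eqxx orbT.
apply/andP; split; last by apply/set0Pn; exists j; rewrite !inE jv eqxx orbT.
by apply/eqP => wv; have := in_set0 i; rewrite -uv0 inE iu -wv cw !inE eqxx.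
Qed.

Lemma card_blowup_gt2 : 2 < #|LB|.
Proof.
have := leq_card _ (can_inj chain_botK); rewrite card_set card_ord.
by apply: leq_trans; apply: leq_trans n_gt2 (ltnW (ltn_expl _ (isT : 1 < 2))).
Qed.

(* Adjacent vertices with different labels are told apart by an atom [chain_bot [set i]]. *)
Lemma Gc_cnbhd_eq u v : e u v -> (cnbhd e u == cnbhd e v) = (collapse u == collapse v).
Proof.
move=> euv; have := euv; rewrite Gc_edgeE => /and4P[uZ vZ _ _].
apply/eqP/eqP => [cn | uv]; last first.
  apply/setP => w; rewrite !inE.
  have [->|wu] := eqVneq w u; first by rewrite Gc_edge_sym euv orbT.
  have [->|wv] := eqVneq w v; first by rewrite euv orbT.
  by rewrite /= !Gc_edgeE uZ vZ ![_ == w]eq_sym wu wv uv.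
have sub a b : a \in Z -> cnbhd e a = cnbhd e b -> collapse a \subset collapse b.
  move=> aZ ab; apply/subsetP => i ia; apply/negPn/negP => ib.
  have bi0 : collapse b :&: [set i] == set0.
    by apply/eqP/setP => l; rewrite !inE; apply: contraNF ib => /andP[lb /eqP <-].
  have : chain_bot [set i] \in cnbhd e b.
    rewrite -ab inE; have [//|ai] /= := eqVneq (chain_bot [set i]) a.
    rewrite Gc_edgeE aZ atom_inZ eq_sym ai chain_botK /=.
    by apply/set0Pn; exists i; rewrite !inE ia eqxx.
  rewrite inE Gc_edgeE chain_botK bi0 !andbF orbF => /eqP bE.
  by move: ib; rewrite -bE chain_botK inE eqxx.
by apply/eqP; rewrite eqEsubset (sub u v) // (sub v u).
Qed.

Lemma mut_max_distant_Gc u v : u \in Z -> v \in Z -> mut_max_distant e u v =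
  (u != v) && ((collapse u :&: collapse v == set0) || (collapse u == collapse v)).
Proof.
move=> uZ vZ; rewrite (mut_max_distant_diam2 Gc_edge_sym Gc_edge_irr Gc_edge_inZ
  Gc_no_isolated Gc_diam2 card_blowup_gt2) //.
have [//|uv] /= := eqVneq u v; have [euv|] /= := boolP (e u v).
  by rewrite Gc_cnbhd_eq //; move: euv; rewrite Gc_edgeE => /and4P[_ _ _ /negbTE ->].
by rewrite Gc_edgeE uZ vZ uv negbK => ->.
Qed.

Lemma SR_vertices_Gc : SR_vertices Z e = Z.
Proof.
apply/setP => u; rewrite inE andb_idr // => uZ; apply/existsP.
have ntC : nontrivial (~: collapse u) by rewrite nontrivialC -zdiv_setE.
exists (chain_bot (~: collapse u)).
rewrite chain_bot_inZ // mut_max_distant_Gc ?chain_bot_inZ //.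
rewrite chain_botK setICr eqxx andbT; apply/eqP => uE.
have := setICr (collapse u); rewrite {2}uE chain_botK setCK setIid => u0.
by move: uZ; rewrite zdiv_setE u0 /nontrivial eqxx.
Qed.

Lemma SR_edge_Gc a b : SR_edge Z e a b = [&& a \in Z, b \in Z, a != b &
  (collapse a :&: collapse b == set0) || (collapse a == collapse b)].
Proof.
rewrite /SR_edge /gedge SR_vertices_Gc; have [aZ|] := boolP (a \in Z) => //=.
have [bZ|] := boolP (b \in Z) => //=; rewrite mut_max_distant_Gc //.
by case: (a != b).
Qed.

Lemma SR_independent_card (S : {set LB}) :
  S \subset Z -> {in S &, forall a b, ~~ SR_edge Z e a b} -> #|S| <= 2 ^ n.-1 - 1.
Proof.
move=> SZ indS; have ntS a : a \in S -> nontrivial (collapse a).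
  by move=> aS; rewrite -zdiv_setE (subsetP SZ).
have meet a b : a \in S -> b \in S -> a != b ->
    (collapse a :&: collapse b != set0) && (collapse a != collapse b).
  move=> aS bS ab; move: (indS a b aS bS).
  by rewrite SR_edge_Gc !(subsetP SZ) // ab negb_or.
have inj : {in S &, injective collapse}.
  move=> a b aS bS ab; apply/eqP/negPn/negP => /(meet a b aS bS)/andP[_].
  by rewrite ab eqxx.
rewrite -(card_in_imset inj) -[in n.-1](card_ord n); apply: intersecting_card.
  by apply/negP => /imsetP[a /ntS/andP[_ aT] Te]; rewrite -Te eqxx in aT.
move=> _ _ /imsetP[a aS ->] /imsetP[b bS ->].
have [<-|ab] := eqVneq a b; last by case/andP: (meet a b aS bS ab).
by rewrite setIid; case/andP: (ntS a aS).
Qed.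

Lemma chain_bot_star_sub i : chain_bot @: star i \subset Z.
Proof.
apply/subsetP => _ /imsetP[x + ->]; rewrite inE => /andP[ix xT].
by apply: chain_bot_inZ; rewrite /nontrivial xT andbT; apply/set0Pn; exists i.
Qed.

Lemma chain_bot_star_independent i :
  {in chain_bot @: star i &, forall a b, ~~ SR_edge Z e a b}.
Proof.
move=> _ _ /imsetP[x xS ->] /imsetP[y yS ->].
rewrite SR_edge_Gc !chain_botK (inj_eq (can_inj chain_botK)).
have [_|xy] /= := eqVneq x y; first by rewrite !andbF.
have xy0 : x :&: y != set0.
  by apply/set0Pn; exists i; move: xS yS; rewrite !inE => /andP[-> _] /andP[-> _].
by rewrite orbF (negbTE xy0) !andbF.
Qed.

End GcGraph.
End BlowUp.

Theorem lemma3p19 (n : nat) (k : {set 'I_n} -> nat) :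
  3 <= n ->
  (forall x : {set 'I_n}, x != set0 -> x != setT -> 0 < k x) ->
  indep_num (SR_vertices (zdiv_set k) (Gc_edge k))
            (SR_edge (zdiv_set k) (Gc_edge k))
  = 2 ^ n.-1 - 1.
Proof.
move=> n_gt2 hk; have k_gt0 x : nontrivial x -> 0 < k x by case/andP; apply: hk.
have n_gt0 : 0 < n := ltnW (ltnW n_gt2).
rewrite SR_vertices_Gc //; apply/eqP; rewrite eqn_leq.
rewrite indep_num_leq /=; last exact: SR_independent_card.
have := card_star (Ordinal n_gt0); rewrite card_ord => <-.
rewrite -(card_imset _ (can_inj (chain_botK k_gt0))).
by apply: leq_indep_num; [apply: chain_bot_star_sub | apply: chain_bot_star_independent].
Qed.
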